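(* Let $\rho : \mathfrak g \to \mathrm{End}(W)$ be a finite-dimensional representation of a complex semisimple Lie algebra $\mathfrak g$, and $\mathfrak h$ a Cartan subalgebra. Let $\lambda$ be a weight of $\mathfrak h$ in $W$ and $W_\lambda = \{w \in W : Hw = \lambda(H) w \ \forall H \in \mathfrak h\}$. If there exists a co-root $H_\alpha$ such that $\lambda(H_\alpha)$ is an even nonzero integer, then $W_\lambda \otimes \mathfrak h$ is contained in the $\mathfrak g$-submodule of $W \otimes \mathfrak g$ generated by the $\mathfrak g$-overshears.
   Context: $W \otimes \mathfrak g$ is a $\mathfrak g$-module via $(\rho\otimes \mathrm{ad})(\xi)(w\otimes \eta) = \rho(\xi)w \otimes \eta + w \otimes [\xi,\eta]$. An element $w \otimes \xi$ ($w\in W$, $\xi \in \mathfrak g$) is a $\mathfrak g$-overshear if $\rho(\xi)^2 w = 0$. For a root $\alpha$, $H_\alpha\in\mathfrak h$ is the co-root, i.e. there are $E_\alpha \in \mathfrak g_\alpha$, $F_\alpha\in\mathfrak g_{-\alpha}$ with $[H_\alpha,E_\alpha]=2E_\alpha$, $[H_\alpha,F_\alpha]=-2F_\alpha$, $[E_\alpha,F_\alpha]=H_\alpha$. *)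

(* Lie algebra g realized on the column space 'cV[F]_n with a
   bracket br, representation space W = 'cV[F]_m, rho : 'cV_n -> 'M_m, and
   W (x) g realized as 'M[F]_(m,n) with  w (x) xi := w *m xi^T. *)
From HB Require Import structures.
From mathcomp Require Import all_boot all_order all_algebra.
Set Implicit Arguments. Unset Strict Implicit. Unset Printing Implicit Defensive.
Import Order.TTheory GRing.Theory Num.Theory.
Local Open Scope ring_scope.

Section LieDefs.
Variable F : fieldType.
Variable n : nat.
Local Notation g := 'cV[F]_n.
Variable br : g -> g -> g.

Definition is_lie : Prop :=
  [/\ forall (a : F) (x y z : g), br (a *: x + y) z = a *: br x z + br y z,
      forall (a : F) (x y z : g), br x (a *: y + z) = a *: br x y + br x z,
      forall x : g, br x x = 0
    & forall x y z : g, br x (br y z) + br y (br z x) + br z (br x y) = 0].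

Definition lie_brs (U V : {vspace g}) : {vspace g} :=
  <<[seq br u v | u <- vbasis U, v <- vbasis V]>>%VS.

Definition lie_ideal (I : {vspace g}) : Prop := (lie_brs fullv I <= I)%VS.
Definition lie_subalg (h : {vspace g}) : Prop := (lie_brs h h <= h)%VS.

Definition derived_series (U : {vspace g}) (k : nat) : {vspace g} :=
  iter k (fun V => lie_brs V V) U.
Definition lie_solvable (U : {vspace g}) : Prop :=
  exists k, derived_series U k = 0%VS.

Definition lower_central (U : {vspace g}) (k : nat) : {vspace g} :=
  iter k (fun V => lie_brs U V) U.
Definition lie_nilpotent (U : {vspace g}) : Prop :=
  exists k, lower_central U k = 0%VS.

Definition semisimple : Prop :=
  forall I : {vspace g}, lie_ideal I -> lie_solvable I -> I = 0%VS.

Definition cartan (h : {vspace g}) : Prop :=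
  [/\ lie_subalg h, lie_nilpotent h &
      forall x : g, (forall y, y \in h -> br x y \in h) -> x \in h].

(* root spaces, roots, co-roots (functionals on h given as functions g -> F,
   only their values on h matter) *)
Definition root_space (h : {vspace g}) (al : g -> F) (x : g) : Prop :=
  forall H, H \in h -> br H x = al H *: x.

Definition is_root (h : {vspace g}) (al : g -> F) : Prop :=
  (exists2 H, H \in h & al H != 0) /\ exists2 x, x != 0 & root_space h al x.

Definition is_coroot (h : {vspace g}) (H : g) : Prop :=
  exists al : g -> F, [/\ is_root h al, H \in h &
    exists E Fa : g, [/\ root_space h al E, root_space h (fun y => - al y) Fa,
       br H E = 2%:R *: E, br H Fa = - (2%:R *: Fa) & br E Fa = H]].

Variable m : nat.
Local Notation W := 'cV[F]_m.
Variable rho : g -> 'M[F]_m.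

Definition is_rep : Prop :=
  [/\ forall (a : F) (x y : g), rho (a *: x + y) = a *: rho x + rho y
    & forall x y : g, rho (br x y) = rho x *m rho y - rho y *m rho x].

Definition tens (w : W) (xi : g) : 'M[F]_(m, n) := w *m xi^T.

(* (rho (x) ad)(x), the linear extension of
   w (x) eta |-> rho(x) w (x) eta + w (x) [x, eta] *)
Definition tens_act (x : g) (T : 'M[F]_(m, n)) : 'M[F]_(m, n) :=
  rho x *m T + \sum_(j < n) tens (col j T) (br x (delta_mx j 0)).

Definition overshear (w : W) (xi : g) : Prop := (rho xi ^+ 2) *m w = 0.

Definition in_overshear_submod (T : 'M[F]_(m, n)) : Prop :=
  forall S : {vspace 'M[F]_(m, n)},
    (forall w xi, overshear w xi -> tens w xi \in S) ->
    (forall x U, U \in S -> tens_act x U \in S) ->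
    T \in S.

Definition weight_space (h : {vspace g}) (lam : g -> F) (w : W) : Prop :=
  forall H, H \in h -> rho H *m w = lam H *: w.

Definition is_weight (h : {vspace g}) (lam : g -> F) : Prop :=
  exists2 w, w != 0 & weight_space h lam w.

End LieDefs.

From HB Require Import structures.
From mathcomp Require Import all_boot all_order all_algebra ring.
Set Implicit Arguments. Unset Strict Implicit. Unset Printing Implicit Defensive.
Import Order.TTheory GRing.Theory Num.Theory.
Local Open Scope ring_scope.

(* Write w (x) H = w (x) (H - c H_a) + c w (x) H_a with c = lam(H) / lam(H_a):
   the first term is an overshear since rho(H - c H_a) kills w, so everything
   reduces to w (x) H_a, a statement about the sl2-triple (E, F, H) of H_a;
   swapping E and F we may assume lam(H_a) = 2K > 0.  If v is a highest
   weight vector (E v = 0), then v (x) E and F v (x) E are overshears, and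
   acting by F on v (x) E yields v (x) H.  If moreover v has weight 2K > 0,
   then F^K v (x) H is an overshear (F^K v has weight 0); acting K - 1 times
   by E on it and correcting with F acting on F v (x) E yields F v (x) H,
   hence v (x) F.  The vectors v with v (x) H and v (x) F in the submodule
   form an F-stable subspace, and a vector of weight 2K is a highest weight
   vector of weight 2K plus a combination of the F^i E^i v with i > 0, so
   induction on the nilpotency order of E on v concludes. *)

Section LieBracket.
Variables (F : fieldType) (n : nat) (br : 'cV[F]_n -> 'cV[F]_n -> 'cV[F]_n).
Hypothesis lie_br : is_lie br.

Lemma lie_brDl x y z : br (x + y) z = br x z + br y z.
Proof. by case: lie_br => brl _ _ _; have := brl 1 x y z; rewrite !scale1r. Qed.

Lemma lie_brDr x y z : br x (y + z) = br x y + br x z.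
Proof. by case: lie_br => _ brr _ _; have := brr 1 x y z; rewrite !scale1r. Qed.

Lemma lie_br0r x : br x 0 = 0.
Proof.
by case: lie_br => _ brr _ _; have := brr (-1) x x x; rewrite !scaleN1r !addNr.
Qed.

Lemma lie_brZr a x y : br x (a *: y) = a *: br x y.
Proof. by case: lie_br => _ brr _ _; rewrite -[a *: y]addr0 brr lie_br0r addr0. Qed.

Lemma lie_br_sumr (I : finType) x (c : I -> F) (y : I -> 'cV[F]_n) :
  br x (\sum_i c i *: y i) = \sum_i c i *: br x (y i).
Proof.
apply: (big_ind2 (fun u v => br x u = v)); first exact: lie_br0r.
  by move=> ? ? ? ? <- <-; rewrite lie_brDr.
by move=> i _; rewrite lie_brZr.
Qed.

Lemma lie_brxx x : br x x = 0.
Proof. by case: lie_br. Qed.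

Lemma lie_br_anti x y : br y x = - br x y.
Proof.
apply/eqP; rewrite -addr_eq0 addrC; apply/eqP.
by have := lie_brxx (x + y); rewrite lie_brDl !lie_brDr !lie_brxx add0r addr0.
Qed.

Lemma lie_brNl x y : br (- x) y = - br x y.
Proof. by rewrite lie_br_anti -[- x]scaleN1r lie_brZr scaleN1r lie_br_anti opprK. Qed.

Definition sl2_triple (E Fa Hh : 'cV[F]_n) : Prop :=
  [/\ br Hh E = 2%:R *: E, br Hh Fa = - (2%:R *: Fa) & br E Fa = Hh].

Lemma sl2_triple_swap E Fa Hh : sl2_triple E Fa Hh -> sl2_triple Fa E (- Hh).
Proof.
case=> brHE brHF brEF; split; first by rewrite lie_brNl brHF opprK.
  by rewrite lie_brNl brHE.
by rewrite lie_br_anti brEF.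
Qed.

End LieBracket.

Section Representation.
Variables (F : fieldType) (n m : nat) (br : 'cV[F]_n -> 'cV[F]_n -> 'cV[F]_n).
Variable rho : 'cV[F]_n -> 'M[F]_m.
Hypothesis rep_rho : is_rep br rho.

Lemma repB x y : rho (x - y) = rho x - rho y.
Proof.
by case: rep_rho => lin _; rewrite addrC -scaleN1r lin scaleN1r addrC.
Qed.

Lemma rep0 : rho 0 = 0.
Proof. by rewrite -(subrr 0) repB subrr. Qed.

Lemma repN x : rho (- x) = - rho x.
Proof. by rewrite -sub0r repB rep0 sub0r. Qed.

Lemma repZ a x : rho (a *: x) = a *: rho x.
Proof. by case: rep_rho => lin _; rewrite -[a *: x]addr0 lin rep0 addr0. Qed.

Lemma rep_br x y : rho (br x y) = rho x *m rho y - rho y *m rho x.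
Proof. by case: rep_rho. Qed.

End Representation.

Section Tensor.
Variables (F : fieldType) (n m : nat).
Implicit Types (v : 'cV[F]_m) (X : 'cV[F]_n).

Lemma tens0l X : tens (0 : 'cV[F]_m) X = 0. Proof. by rewrite /tens mul0mx. Qed.
Lemma tensDl v1 v2 X : tens (v1 + v2) X = tens v1 X + tens v2 X.
Proof. by rewrite /tens mulmxDl. Qed.
Lemma tensZl a v X : tens (a *: v) X = a *: tens v X.
Proof. by rewrite /tens scalemxAl. Qed.

Lemma tens0r v : tens v (0 : 'cV[F]_n) = 0. Proof. by rewrite /tens trmx0 mulmx0. Qed.
Lemma tensDr v X1 X2 : tens v (X1 + X2) = tens v X1 + tens v X2.
Proof. by rewrite /tens linearD mulmxDr. Qed.
Lemma tensZr a v X : tens v (a *: X) = a *: tens v X.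
Proof. by rewrite /tens linearZ scalemxAr. Qed.
Lemma tensNr v X : tens v (- X) = - tens v X.
Proof. by rewrite /tens linearN mulmxN. Qed.

Variables (br : 'cV[F]_n -> 'cV[F]_n -> 'cV[F]_n) (rho : 'cV[F]_n -> 'M[F]_m).

Lemma tens_act_linear x a (A B : 'M[F]_(m, n)) :
  tens_act br rho x (a *: A + B) = a *: tens_act br rho x A + tens_act br rho x B.
Proof.
rewrite /tens_act mulmxDr -scalemxAr scalerDr addrACA scaler_sumr -big_split /=.
congr (_ + _); apply: eq_bigr => j _.
by rewrite linearP /= tensDl tensZl.
Qed.

Lemma tens_act_tens x v X : is_lie br ->
  tens_act br rho x (tens v X) = tens (rho x *m v) X + tens v (br x X).
Proof.
move=> lie_br; rewrite /tens_act {1}/tens mulmxA; congr (_ + _).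
have {2}-> : X = \sum_j X j 0 *: delta_mx j 0.
  by rewrite {1}(matrix_sum_delta X); apply: eq_bigr => j _; rewrite big_ord1.
rewrite lie_br_sumr // /tens linear_sum mulmx_sumr /=; apply: eq_bigr => j _.
rewrite linearZ /= -scalemxAr scalemxAl; congr (_ *m _).
by apply/matrixP => i k; rewrite !mxE big_ord1 !mxE (ord1 k) mulrC.
Qed.

End Tensor.

Lemma mulmx_exprS (F : fieldType) m (A : 'M[F]_m) j (v : 'cV[F]_m) :
  A ^+ j.+1 *m v = A *m (A ^+ j *m v).
Proof. by rewrite exprS mulmxA. Qed.

Lemma mulmx_exprSr (F : fieldType) m (A : 'M[F]_m) j (v : 'cV[F]_m) :
  A ^+ j.+1 *m v = A ^+ j *m (A *m v).
Proof. by rewrite exprSr mulmxA. Qed.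

Lemma mulmx_exprD (F : fieldType) m (A : 'M[F]_m) i j (v : 'cV[F]_m) :
  A ^+ (i + j) *m v = A ^+ i *m (A ^+ j *m v).
Proof. by rewrite exprD mulmxA. Qed.

Lemma eigen_shift_nilpotent (F : fieldType) m (A B : 'M[F]_m) (mu : nat -> F)
    (v : 'cV[F]_m) :
  injective mu -> (forall j, B *m (A ^+ j *m v) = mu j *: (A ^+ j *m v)) ->
  A ^+ m *m v = 0.
Proof.
move=> mu_inj eigen; apply/eqP/negPn/negP => Amv_neq0.
have Ajv_neq0 j : (j <= m)%N -> A ^+ j *m v != 0.
  move=> le_jm; apply: contra Amv_neq0 => /eqP Ajv0.
  by rewrite -[X in A ^+ X](subnK le_jm) mulmx_exprD Ajv0 mulmx0.
have roots : all (root (char_poly B^T)) (map mu (iota 0 m.+1)).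
  apply/allP => _ /mapP[j + ->]; rewrite mem_iota add0n => /andP[_ lt_jm].
  rewrite -eigenvalue_root_char; apply/eigenvalueP; exists (A ^+ j *m v)^T.
    by rewrite -trmx_mul eigen linearZ.
  by rewrite trmx_eq0 Ajv_neq0.
have := max_poly_roots (monic_neq0 (char_poly_monic _)) roots.
rewrite map_inj_uniq ?iota_uniq // size_map size_iota size_char_poly ltnn.
by move=> /(_ isT).
Qed.

Lemma pchar0_natr_inj (F : fieldType) :
  has_pchar0 F -> injective (fun k : nat => k%:R : F).
Proof.
move=> charF i j; wlog le_ij : i j / (i <= j)%N => [wlog_le | eq_ij].
  by case/orP: (leq_total i j) => /wlog_le // + /esym => /[apply] ->.
apply/eqP; rewrite eqn_leq le_ij /= -subn_eq0 -((pcharf0P F).1 charF) natrB //.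
by rewrite eq_ij subrr.
Qed.

(* Chosen so that [e *m hw_proj mu N v] telescopes, see raise_hw_proj. *)
Fixpoint hw_coef (F : fieldType) (mu : F) (i : nat) : F :=
  if i is i'.+1 then - hw_coef mu i' / (i'.+1%:R * (mu + i'.+2%:R)) else 1.

Section Sl2Module.
Variables (F : fieldType) (m : nat) (e f h : 'M[F]_m).
Hypotheses (comm_he : h *m e - e *m h = 2%:R *: e)
  (comm_hf : h *m f - f *m h = - (2%:R *: f)) (comm_ef : e *m f - f *m e = h).
Implicit Types (v : 'cV[F]_m) (mu : F).

Lemma mulmx_he v : h *m (e *m v) = e *m (h *m v) + 2%:R *: (e *m v).
Proof. by rewrite !mulmxA scalemxAl -comm_he mulmxBl addrC subrK. Qed.

Lemma mulmx_hf v : h *m (f *m v) = f *m (h *m v) - 2%:R *: (f *m v).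
Proof. by rewrite !mulmxA scalemxAl -mulNmx -comm_hf mulmxBl addrC subrK. Qed.

Lemma mulmx_ef v : e *m (f *m v) = f *m (e *m v) + h *m v.
Proof. by rewrite !mulmxA -comm_ef mulmxBl addrC subrK. Qed.

Lemma weight_raise v mu j : h *m v = mu *: v ->
  h *m (e ^+ j *m v) = (mu + (2 * j)%:R) *: (e ^+ j *m v).
Proof.
move=> hv; elim: j => [|j IHj]; first by rewrite muln0 addr0 expr0 mul1mx.
rewrite mulmx_exprS mulmx_he IHj -scalemxAr -scalerDl; congr (_ *: _); ring.
Qed.

Lemma weight_lower v mu j : h *m v = mu *: v ->
  h *m (f ^+ j *m v) = (mu - (2 * j)%:R) *: (f ^+ j *m v).
Proof.
move=> hv; elim: j => [|j IHj]; first by rewrite muln0 subr0 expr0 mul1mx.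
rewrite mulmx_exprS mulmx_hf IHj -scalemxAr -scalerBl; congr (_ *: _); ring.
Qed.

Lemma raise_lower v mu i : h *m v = mu *: v ->
  e *m (f ^+ i.+1 *m v) =
    f ^+ i.+1 *m (e *m v) + (i.+1%:R * (mu - i%:R)) *: (f ^+ i *m v).
Proof.
move=> hv; elim: i => [|i IHi].
  by rewrite expr1 expr0 mul1mx mulmx_ef hv mul1r subr0.
rewrite mulmx_exprS mulmx_ef IHi (weight_lower _ hv) mulmxDr -scalemxAr.
rewrite -!mulmx_exprS -addrA -scalerDl; congr (_ + _ *: _); ring.
Qed.

Definition hw_proj mu N v :=
  \sum_(i < N.+1) hw_coef mu i *: (f ^+ i *m (e ^+ i *m v)).

Lemma hw_projE mu N v :
  hw_proj mu N v =
    v + \sum_(i < N) hw_coef mu i.+1 *: (f ^+ i.+1 *m (e ^+ i.+1 *m v)).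
Proof. by rewrite /hw_proj big_ord_recl /= !expr0 !mul1mx scale1r. Qed.

Lemma hw_proj_weight v mu N : h *m v = mu *: v ->
  h *m hw_proj mu N v = mu *: hw_proj mu N v.
Proof.
move=> hv; rewrite mulmx_sumr scaler_sumr; apply: eq_bigr => i _.
rewrite -scalemxAr (weight_lower _ (weight_raise _ hv)) addrK.
by rewrite scalerA mulrC -scalerA.
Qed.

Hypothesis charF : has_pchar0 F.
Let natf_eq0 k : (k%:R == 0 :> F) = (k == 0)%N := (pcharf0P F).1 charF k.

Lemma raise_hw_proj v d N : h *m v = d%:R *: v ->
  e *m hw_proj d%:R N v = hw_coef d%:R N *: (f ^+ N *m (e ^+ N.+1 *m v)).
Proof.
move=> hv; elim: N => [|N IHN].
  by rewrite /hw_proj big_ord1 /= !expr0 !mul1mx !scale1r expr1.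
rewrite /hw_proj big_ord_recr /= mulmxDr -/(hw_proj _ N v) IHN -scalemxAr.
rewrite (raise_lower _ (weight_raise _ hv)) -mulmx_exprS scalerDr scalerA addrCA.
have den_neq0 : N.+1%:R * (d%:R + N.+2%:R) != 0 :> F.
  by rewrite -natrD -natrM natf_eq0 muln_eq0 addnS.
have -> : d%:R + (2 * N.+1)%:R - N%:R = d%:R + N.+2%:R :> F.
  by rewrite !natrM; ring.
by rewrite -scalerDl /= divfK // addrN scale0r addr0.
Qed.

Lemma hw_proj_highest v d N : h *m v = d%:R *: v -> e ^+ N.+1 *m v = 0 ->
  e *m hw_proj d%:R N v = 0.
Proof. by move=> hv eNv0; rewrite raise_hw_proj // eNv0 mulmx0 scaler0. Qed.

Lemma raise_lower_highest v d j l : e *m v = 0 -> h *m v = d%:R *: v ->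
  (j + l <= d)%N ->
  exists2 a : F, a != 0 & e ^+ j *m (f ^+ (j + l) *m v) = a *: (f ^+ l *m v).
Proof.
move=> ev0 hv; elim: j => [|j IHj] le_jl_d.
  by exists 1; rewrite ?oner_eq0 ?expr0 ?mul1mx ?scale1r.
have [a a_neq0 IHa] := IHj (ltnW le_jl_d).
exists ((j + l).+1%:R * (d%:R - (j + l)%:R) * a).
  rewrite -natrB ?(ltnW le_jl_d) // -natrM mulf_neq0 //.
  by rewrite natf_eq0 muln_eq0 subn_eq0 -ltnNge.
rewrite addSn mulmx_exprSr (raise_lower _ hv) ev0 mulmx0 add0r.
by rewrite -scalemxAr IHa scalerA.
Qed.

Lemma raise_nilpotent v mu : h *m v = mu *: v -> e ^+ m *m v = 0.
Proof.
move=> hv; apply: (eigen_shift_nilpotent (mu := fun j => mu + (2 * j)%:R)).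
  move=> i j /addrI /(pchar0_natr_inj charF) /eqP; rewrite eqn_mul2l /=.
  exact/eqP.
by move=> j; exact: weight_raise.
Qed.

End Sl2Module.

Section Sl2Tensor.
Variables (F : fieldType) (n m : nat).
Hypothesis charF : has_pchar0 F.
Variables (br : 'cV[F]_n -> 'cV[F]_n -> 'cV[F]_n) (rho : 'cV[F]_n -> 'M[F]_m).
Hypotheses (lie_br : is_lie br) (rep_rho : is_rep br rho).
Variables (E Fa Hh : 'cV[F]_n).
Hypothesis sl2_EFH : sl2_triple br E Fa Hh.
Variable S : {vspace 'M[F]_(m, n)}.
Hypotheses (S_overshear : forall w xi, overshear rho w xi -> tens w xi \in S)
  (S_act : forall x U, U \in S -> tens_act br rho x U \in S).

Local Notation e := (rho E).
Local Notation f := (rho Fa).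
Local Notation h := (rho Hh).

Let natf_eq0 k : (k%:R == 0 :> F) = (k == 0)%N := (pcharf0P F).1 charF k.

Let brHE : br Hh E = 2%:R *: E. Proof. by case: sl2_EFH. Qed.
Let brHF : br Hh Fa = - (2%:R *: Fa). Proof. by case: sl2_EFH. Qed.
Let brEF : br E Fa = Hh. Proof. by case: sl2_EFH. Qed.

Let comm_he : h *m e - e *m h = 2%:R *: e.
Proof. by rewrite -(rep_br rep_rho) brHE (repZ rep_rho). Qed.
Let comm_hf : h *m f - f *m h = - (2%:R *: f).
Proof. by rewrite -(rep_br rep_rho) brHF (repN rep_rho) (repZ rep_rho). Qed.
Let comm_ef : e *m f - f *m e = h.
Proof. by rewrite -(rep_br rep_rho) brEF. Qed.

Let brEH : br E Hh = - (2%:R *: E). Proof. by rewrite (lie_br_anti lie_br) brHE. Qed.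
Let brFH : br Fa Hh = 2%:R *: Fa.
Proof. by rewrite (lie_br_anti lie_br) brHF opprK. Qed.
Let brFE : br Fa E = - Hh. Proof. by rewrite (lie_br_anti lie_br) brEF. Qed.

Let act_tens x v X :
  tens_act br rho x (tens v X) = tens (rho x *m v) X + tens v (br x X).
Proof. exact: tens_act_tens. Qed.

Lemma tens_overshear v X : rho X *m (rho X *m v) = 0 -> tens v X \in S.
Proof. by move=> XXv0; apply: S_overshear; rewrite /overshear expr2 -mulmxA. Qed.

Lemma tens_lowered_highest_E v : e *m v = 0 -> tens (f *m v) E \in S.
Proof.
move=> ev0; apply: tens_overshear.
have := mulmx_he comm_he v; rewrite ev0 mulmx0 scaler0 addr0 => /esym ehv0.
by rewrite (mulmx_ef comm_ef) ev0 mulmx0 add0r.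
Qed.

Lemma tens_highest_H v : e *m v = 0 -> tens v Hh \in S.
Proof.
move=> ev0; have vE : tens v E \in S by apply: tens_overshear; rewrite ev0 mulmx0.
have := memvB (tens_lowered_highest_E ev0) (S_act Fa vE).
by rewrite act_tens brFE tensNr opprD opprK addNKr.
Qed.

Lemma tens_H_raise z j : tens z Hh \in S ->
  tens (e ^+ j.+1 *m z) Hh - (2 * j.+1)%:R *: tens (e ^+ j *m z) E \in S.
Proof.
move=> zH; elim: j => [|j IHj].
  by have := S_act E zH; rewrite act_tens brEH tensNr tensZr expr1 expr0 mul1mx.
have := S_act E IHj; rewrite addrC -scaleNr tens_act_linear !act_tens.
rewrite brEH (lie_brxx lie_br) tens0r addr0 -!mulmx_exprS tensNr tensZr.
by rewrite addrCA scaleNr -opprD -scalerDl -natrD addnC -mulnS.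
Qed.

Lemma tens_lowered_highest_H v K : (0 < K)%N -> e *m v = 0 ->
  h *m v = (2 * K)%:R *: v -> tens (f *m v) Hh \in S.
Proof.
case: K => [//|K] _ ev0 hv.
have hfKv0 : h *m (f ^+ K.+1 *m v) = 0.
  by rewrite (weight_lower comm_hf _ hv) subrr scale0r.
case: K => [|p] in hv hfKv0 *.
  by apply: tens_overshear; rewrite expr1 in hfKv0; rewrite hfKv0 mulmx0.
have zH : tens (f ^+ p.+2 *m v) Hh \in S.
  by apply: tens_overshear; rewrite hfKv0 mulmx0.
have [a a_neq0 epz] : exists2 a : F, a != 0 &
    e ^+ p *m (f ^+ p.+2 *m v) = a *: (f ^+ 2 *m v).
  by rewrite -addn2; apply: (raise_lower_highest comm_hf comm_ef charF ev0 hv);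
    rewrite addn2 mul2n -addnn leq_addr.
have ep1z : e ^+ p.+1 *m (f ^+ p.+2 *m v) =
    (a * (2%:R * ((2 * p.+2)%:R - 1))) *: (f *m v).
  rewrite mulmx_exprS epz -scalemxAr (raise_lower comm_hf comm_ef _ hv).
  by rewrite ev0 mulmx0 add0r scalerA expr1.
have := tens_H_raise p zH; rewrite ep1z epz !tensZl scalerA.
have fvE_lowered : tens (f ^+ 2 *m v) E - tens (f *m v) Hh \in S.
  have := S_act Fa (tens_lowered_highest_E ev0).
  by rewrite act_tens brFE tensNr expr2 -mulmxA.
move=> /memvD /(_ (memvZ ((2 * p.+1)%:R * a) fvE_lowered)).
rewrite scalerBr addrA subrK -scalerBl.
have -> : a * (2%:R * ((2 * p.+2)%:R - 1)) - (2 * p.+1)%:R * a = a * (2 * p.+2)%:R.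
  by rewrite !natrM; ring.
by rewrite rpredZeq mulf_eq0 natf_eq0 (negPf a_neq0).
Qed.

Lemma tens_highest_F v K : (0 < K)%N -> e *m v = 0 ->
  h *m v = (2 * K)%:R *: v -> tens v Fa \in S.
Proof.
move=> K_gt0 ev0 hv; suff : 2%:R *: tens v Fa \in S by rewrite rpredZeq natf_eq0.
have := memvB (S_act Fa (tens_highest_H ev0)) (tens_lowered_highest_H K_gt0 ev0 hv).
by rewrite act_tens brFH tensZr addrC addKr.
Qed.

Definition tensHF : {pred 'cV[F]_m} :=
  fun v => (tens v Hh \in S) && (tens v Fa \in S).

Fact tensHF_submod_closed : submod_closed tensHF.
Proof.
split; first by rewrite unfold_in /= !tens0l mem0v.
move=> a u v /andP[uH uF] /andP[vH vF].
by apply/andP; rewrite !tensDl !tensZl; split; apply: memvD; rewrite ?memvZ.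
Qed.

HB.instance Definition _ :=
  GRing.isSubmodClosed.Build F 'cV[F]_m tensHF tensHF_submod_closed.

Lemma tensHF_lower v : v \in tensHF -> f *m v \in tensHF.
Proof.
move=> /andP[vH vF]; apply/andP; split.
  have := memvB (S_act Fa vH) (memvZ 2%:R vF).
  by rewrite act_tens brFH tensZr addrK.
by have := S_act Fa vF; rewrite act_tens (lie_brxx lie_br) tens0r addr0.
Qed.

Lemma tensHF_lower_pow j v : v \in tensHF -> f ^+ j *m v \in tensHF.
Proof.
move=> vHF; elim: j => [|j IHj]; first by rewrite expr0 mul1mx.
by rewrite mulmx_exprS tensHF_lower.
Qed.

Lemma tensHF_weight N v K : (0 < K)%N -> h *m v = (2 * K)%:R *: v ->
  e ^+ N *m v = 0 -> v \in tensHF.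
Proof.
elim: N v K => [|N IHN] v K K_gt0 hv eNv0.
  by move: eNv0; rewrite expr0 mul1mx => ->; apply: rpred0.
have -> : v = hw_proj e f (2 * K)%:R N v -
    \sum_(i < N) hw_coef (2 * K)%:R i.+1 *: (f ^+ i.+1 *m (e ^+ i.+1 *m v)).
  by rewrite hw_projE addrK.
apply: rpredB.
  have ev0 := hw_proj_highest comm_he comm_hf comm_ef charF hv eNv0.
  have hv0 := hw_proj_weight comm_he comm_hf N hv.
  by apply/andP; split; [apply: tens_highest_H | apply: (tens_highest_F K_gt0)].
apply: rpred_sum => i _; apply/rpredZ/tensHF_lower_pow.
apply: (IHN _ (K + i.+1)%N); first by rewrite addnS.
  by rewrite (weight_raise comm_he _ hv) -natrD -mulnDr.
by rewrite -mulmx_exprD addnC addSnnS mulmx_exprD eNv0 mulmx0.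
Qed.

Lemma tens_pos_even_weight_H v K : (0 < K)%N -> h *m v = (2 * K)%:R *: v ->
  tens v Hh \in S.
Proof.
move=> K_gt0 hv.
by case/andP: (tensHF_weight K_gt0 hv (raise_nilpotent comm_he charF hv)).
Qed.

End Sl2Tensor.

Lemma tens_even_weight_H (F : fieldType) n m
    (br : 'cV[F]_n -> 'cV[F]_n -> 'cV[F]_n) (rho : 'cV[F]_n -> 'M[F]_m)
    (E Fa Hh : 'cV[F]_n) (w : 'cV[F]_m) (k : int) :
  has_pchar0 F -> is_lie br -> is_rep br rho -> sl2_triple br E Fa Hh ->
  k != 0 -> rho Hh *m w = (2 * k)%:~R *: w ->
  in_overshear_submod br rho (tens w Hh).
Proof.
move=> charF lie_br rep_rho sl2_EFH + + S S_overshear S_act.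
case: k => [[|K] // | K] _ hw.
  exact: (tens_pos_even_weight_H charF lie_br rep_rho sl2_EFH S_overshear S_act _ hw).
rewrite -memvN -tensNr.
apply: (tens_pos_even_weight_H charF lie_br rep_rho (sl2_triple_swap lie_br sl2_EFH)
  S_overshear S_act (K := K.+1)) => //.
by rewrite (repN rep_rho) mulNmx hw -scaleNr NegzE mulrN -PoszM rmorphN opprK.
Qed.

Theorem lemma3p9 (F : numClosedFieldType) (n m : nat)
  (br : 'cV[F]_n -> 'cV[F]_n -> 'cV[F]_n) (rho : 'cV[F]_n -> 'M[F]_m)
  (h : {vspace 'cV[F]_n}) (lam : 'cV[F]_n -> F) :
  is_lie br -> semisimple br -> is_rep br rho -> cartan br h ->
  is_weight rho h lam ->
  (exists Ha : 'cV[F]_n, is_coroot br h Ha /\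
     exists k : int, k != 0 /\ lam Ha = (2 * k)%:~R) ->
  forall (w : 'cV[F]_m) (H : 'cV[F]_n),
    weight_space rho h lam w -> H \in h ->
    in_overshear_submod br rho (tens w H).
Proof.
move=> lie_br _ rep_rho _ _ [Ha [[al [_ Ha_h [E [Fa [_ _ brHE brHF brEF]]]]]]].
move=> [k [k_neq0 lamHa]] w H w_wt H_h S S_overshear S_act.
have wHa : rho Ha *m w = (2 * k)%:~R *: w by rewrite w_wt // lamHa.
have wHa_S : tens w Ha \in S.
  have sl2_EFH : sl2_triple br E Fa Ha by split.
  exact: (tens_even_weight_H (pchar_num F) lie_br rep_rho sl2_EFH k_neq0 wHa).
have two_k_neq0 : (2 * k)%:~R != 0 :> F by rewrite intr_eq0 mulf_neq0.
pose c := lam H / (2 * k)%:~R.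
have shear_w : rho (H - c *: Ha) *m w = 0.
  rewrite (repB rep_rho) (repZ rep_rho) mulmxBl -scalemxAl wHa w_wt // scalerA.
  by rewrite /c divfK // subrr.
have shear_S : tens w (H - c *: Ha) \in S.
  by apply: S_overshear; rewrite /overshear expr2 -mulmxA shear_w mulmx0.
by rewrite -(subrK (c *: Ha) H) tensDr tensZr memvD // memvZ.
Qed.
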